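(* Let $\mathcal A: f=0$ be an arrangement of $d$ lines in $\mathbb P^2$ and let $m$ be the multiplicity of one of its intersection points. Then either $mdr(f)=d-m$, or $mdr(f)\le d-m-1$ and one of the following two cases occurs: (1) $mdr(f)\le m-1$; then in fact $mdr(f)=m-1$, one has $2m<d+1$, and $\mathcal A$ is free with exponents $d_1=mdr(f)=m-1$ and $d_2=d-m$; (2) $m\le mdr(f)\le d-m-1$, in particular $2m<d$.
   Context: A line arrangement $\mathcal A: f=0$ is a finite set of distinct lines, $f\in\mathbb C[x,y,z]$ the product of their linear forms, $d=\deg f$ the number of lines. The multiplicity of an intersection point is the number of lines of $\mathcal A$ through it. $mdr(f)$ is the smallest integer $r\ge 0$ such that there exist homogeneous $a,b,c$ of degree $r$, not all zero, with $af_x+bf_y+cf_z=0$. The curve is free if the module $AR(f)=\{(a,b,c)\in S^3: af_x+bf_y+cf_z=0\}$ is a free $S$-module (of rank 2) generated by homogeneous syzygies of degrees $d_1\le d_2$, called the exponents. *)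

From HB Require Import structures.
From mathcomp Require Import all_boot all_order all_algebra.
From mathcomp Require Import reals.
From mathcomp Require Import complex.
From mathcomp Require Import mpoly.
Set Implicit Arguments. Unset Strict Implicit. Unset Printing Implicit Defensive.
Import Order.TTheory GRing.Theory Num.Theory.
Local Open Scope ring_scope.

Section LineArr.
Variable R : realType.
Local Notation C := (complex R).
Local Notation S := {mpoly C[3]}.

Definition linform (v : 'I_3 -> C) : S := \sum_(i < 3) v i *: 'X_i.

Definition is_line_arrangement (L : seq ('I_3 -> C)) : Prop :=
  (forall j, (j < size L)%N -> exists k, (nth (fun _ => 0) L j) k != 0) /\
  (forall i j, (i < size L)%N -> (j < size L)%N -> i <> j ->
     forall lam : C, ~ (forall k, (nth (fun _ => 0) L j) k = lam * (nth (fun _ => 0) L i) k)).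

Definition arr_poly (L : seq ('I_3 -> C)) : S := \prod_(v <- L) linform v.

Definition on_line (p v : 'I_3 -> C) : bool := \sum_(i < 3) v i * p i == 0.

Definition mult_pt (L : seq ('I_3 -> C)) (p : 'I_3 -> C) : nat :=
  count (on_line p) L.

Definition is_intersection_point (L : seq ('I_3 -> C)) (p : 'I_3 -> C) : Prop :=
  (exists i, p i != 0) /\ (2 <= mult_pt L p)%N.

Definition is_syzygy (f : S) (rho : 'I_3 -> S) : Prop :=
  \sum_(i < 3) rho i * mderiv i f = 0.

Definition homog_triple (r : nat) (rho : 'I_3 -> S) : Prop :=
  forall i, rho i \is r.-homog.

Definition mdr_is (f : S) (r : nat) : Prop :=
  (exists rho, homog_triple r rho /\ is_syzygy f rho /\ exists i, rho i != 0) /\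
  (forall r', (r' < r)%N -> forall rho, homog_triple r' rho -> is_syzygy f rho ->
                 forall i, rho i = 0).

(* AR(f) is a free S-module of rank 2 with basis homogeneous syzygies of
   degrees d1 <= d2 *)
Definition free_with_exponents (f : S) (d1 d2 : nat) : Prop :=
  (d1 <= d2)%N /\
  exists rho1 rho2 : 'I_3 -> S,
    [/\ homog_triple d1 rho1 /\ homog_triple d2 rho2,
        is_syzygy f rho1 /\ is_syzygy f rho2,
        (forall rho, is_syzygy f rho ->
           exists h1 h2 : S, forall i, rho i = h1 * rho1 i + h2 * rho2 i) &
        (forall h1 h2 : S, (forall i, h1 * rho1 i + h2 * rho2 i = 0) ->
           h1 = 0 /\ h2 = 0)].

End LineArr.

From HB Require Import structures.
From mathcomp Require Import all_boot all_order all_algebra.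
From mathcomp Require Import reals complex mpoly.
From mathcomp Require Import ring zify.
Set Implicit Arguments. Unset Strict Implicit. Unset Printing Implicit Defensive.
Import Order.TTheory GRing.Theory Num.Theory.
Local Open Scope ring_scope.

(* Write f = g h, with g the product of the m lines through p and h the
   product of the others, and D_p for the derivation in the direction p.
   Euler's relation and D_p g = 0 show that rho_p = D_p(h) (x,y,z) - d h p is
   a nonzero syzygy of degree d - m, so mdr f <= d - m.  For any syzygy rho,
   det(p, (x,y,z), rho) vanishes on every line through p, hence is divisible
   by g; and when it is zero, rho is a polynomial multiple of rho_p.  So a
   minimal syzygy of degree r < d - m has a nonzero determinant, of degree
   r + 1 >= m; when r = m - 1 this determinant is a constant multiple of g,
   and then (rho, rho_p) is a basis of AR(f). *)

Section Derivation.
Variables (n : nat) (K : comNzRingType).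
Local Notation S := {mpoly K[n]}.
Implicit Types (P Q : S) (rho : 'I_n -> S) (p v : 'I_n -> K) (s : seq {ffun 'I_n -> K}).

Definition derivation rho P : S := \sum_(i < n) rho i * mderiv i P.

Definition euler_field : 'I_n -> S := fun i => 'X_i.
Definition const_field p : 'I_n -> S := fun i => (p i)%:MP.

Definition lin_form v : S := \sum_(i < n) v i *: 'X_i.
Definition lin_prod s : S := \prod_(v <- s) lin_form v.
Definition incident p (v : {ffun 'I_n -> K}) : bool := \sum_(i < n) v i * p i == 0.

Lemma lin_prod_nil : lin_prod [::] = 1.
Proof. exact: big_nil. Qed.

Lemma lin_prod_cons l s : lin_prod (l :: s) = lin_form l * lin_prod s.
Proof. exact: big_cons. Qed.

Lemma lin_prod_filterC (a : pred {ffun 'I_n -> K}) s :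
  lin_prod s = lin_prod [seq l <- s | a l] * lin_prod [seq l <- s | ~~ a l].
Proof. by rewrite /lin_prod !big_filter (bigID a). Qed.

Lemma lin_prod_rem l s : l \in s -> lin_prod s = lin_form l * lin_prod (rem l s).
Proof. exact: big_rem. Qed.

Lemma eq_derivation rho rho' P : rho =1 rho' -> derivation rho P = derivation rho' P.
Proof. by move=> E; apply: eq_bigr => i _; rewrite E. Qed.

Lemma derivationM rho P Q :
  derivation rho (P * Q) = derivation rho P * Q + P * derivation rho Q.
Proof.
rewrite /derivation mulr_suml mulr_sumr -big_split /=; apply: eq_bigr => i _.
by rewrite mderivM; ring.
Qed.

Lemma derivationC rho c : derivation rho c%:MP = 0.
Proof. by rewrite /derivation big1 // => i _; rewrite mderivC mulr0. Qed.

Lemma derivation1 rho : derivation rho 1 = 0.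
Proof. by rewrite -(rmorph1 (@mpolyC n K)) derivationC. Qed.

Lemma derivation_comb (a b : S) (x y : 'I_n -> S) P :
  derivation (fun i => a * x i + b * y i) P = a * derivation x P + b * derivation y P.
Proof.
rewrite /derivation !mulr_sumr -big_split /=; apply: eq_bigr => i _; ring.
Qed.

Lemma mderiv_lin_form i v : mderiv i (lin_form v) = (v i)%:MP.
Proof.
rewrite /lin_form raddf_sum (bigD1 i) //= big1 ?addr0 => [|j ji].
  rewrite mderivZ mderivX mnm1E eqxx (_ : (_ - _)%MM = 0%MM) ?mpolyX0.
    by rewrite scale1r -mul_mpolyC mulr1.
  by apply/mnmP => k; rewrite mnmBE subnn mnm0E.
by rewrite mderivZ mderivX mnm1E (negbTE ji) scale0r scaler0.
Qed.

Lemma derivation_lin_form rho v :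
  derivation rho (lin_form v) = \sum_(i < n) rho i * (v i)%:MP.
Proof. by apply: eq_bigr => i _; rewrite mderiv_lin_form. Qed.

Lemma derivation_euler_lin_form v : derivation euler_field (lin_form v) = lin_form v.
Proof.
by rewrite derivation_lin_form; apply: eq_bigr => i _; rewrite mulrC mul_mpolyC.
Qed.

Lemma derivation_const_lin_form p v :
  derivation (const_field p) (lin_form v) = (\sum_(i < n) v i * p i)%:MP.
Proof.
rewrite derivation_lin_form rmorph_sum; apply: eq_bigr => i _.
by rewrite -rmorphM mulrC.
Qed.

Lemma euler_lin_prod s : derivation euler_field (lin_prod s) = (size s)%:R * lin_prod s.
Proof.
elim: s => [|j s IH]; first by rewrite lin_prod_nil derivation1 mul0r.
rewrite lin_prod_cons derivationM derivation_euler_lin_form IH /= mulrSr; ring.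
Qed.

Lemma derivation_const_lin_prod_incident p s :
  all (incident p) s -> derivation (const_field p) (lin_prod s) = 0.
Proof.
elim: s => [|j s IH]; first by rewrite lin_prod_nil derivation1.
move=> /= /andP[/eqP pj /IH {}IH].
by rewrite lin_prod_cons derivationM IH derivation_const_lin_form pj mulr0 mul0r addr0.
Qed.

Lemma meval_lin_form x v : (lin_form v).@[x] = \sum_(i < n) v i * x i.
Proof. by rewrite /lin_form raddf_sum /=; apply: eq_bigr => i _; rewrite mevalZ mevalXU. Qed.

Lemma meval_derivation_const x P :
  (derivation (const_field x) P).@[x] = (derivation euler_field P).@[x].
Proof.
by rewrite /derivation !raddf_sum /=; apply: eq_bigr => i _; rewrite !mevalM mevalC mevalXU.
Qed.

Lemma mpolyX_dhomog i : ('X_i : S) \is 1.-homog.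
Proof. by rewrite dhomogX; apply/eqP; exact: mdeg1. Qed.

Lemma lin_form_dhomog v : lin_form v \is 1.-homog.
Proof. by apply: rpred_sum => i _; apply/rpredZ/mpolyX_dhomog. Qed.

Lemma lin_prod_dhomog s : lin_prod s \is (size s).-homog.
Proof.
elim: s => [|j s IH]; first by rewrite lin_prod_nil dhomog1.
by rewrite lin_prod_cons; apply: (dhomogM (lin_form_dhomog _) IH).
Qed.

Lemma derivation_const_lin_prod_dhomog p s :
  derivation (const_field p) (lin_prod s) \is (size s).-1.-homog.
Proof.
elim: s => [|j s IH]; first by rewrite lin_prod_nil derivation1 dhomog0.
rewrite lin_prod_cons derivationM derivation_const_lin_form /=.
apply: rpredD; first by rewrite mul_mpolyC dhomogZ ?lin_prod_dhomog.
case: s IH => [|j' s] IH; first by rewrite lin_prod_nil derivation1 mulr0 dhomog0.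
exact: (dhomogM (lin_form_dhomog _) IH).
Qed.

End Derivation.

Arguments euler_field {n K}.
Arguments mpolyX_dhomog {n K}.

Section LinearFactors.
Variables (n : nat) (K : fieldType).
Local Notation S := {mpoly K[n]}.
Implicit Types (P Q : S) (v w : 'I_n -> K).

Definition mdvd (a P : S) : Prop := exists Q, P = a * Q.

Definition proportional v w : Prop := exists c : K, forall i, w i = c * v i.

Lemma mdvdD a P Q : mdvd a P -> mdvd a Q -> mdvd a (P + Q).
Proof. by move=> [P' ->] [Q' ->]; exists (P' + Q'); rewrite mulrDr. Qed.

Lemma mdvd_mulr a P Q : mdvd a P -> mdvd a (P * Q).
Proof. by move=> [P' ->]; exists (P' * Q); rewrite mulrA. Qed.

Lemma mdvd_mull a P Q : mdvd a Q -> mdvd a (P * Q).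
Proof. by rewrite mulrC; apply: mdvd_mulr. Qed.

Lemma msize_dhomog P d : P != 0 -> P \is d.-homog -> msize P = d.+1.
Proof.
move=> P0 hP; rewrite (dhomog_uniq P0 hP (dhomog_msize hP)) prednK //.
by rewrite lt0n msize_poly_eq0.
Qed.

Lemma msize_dhomogM (d e : nat) P Q : P * Q != 0 -> P \is e.-homog -> P * Q \is d.-homog ->
  msize Q + e = d.+1.
Proof.
move=> PQ0 hP hPQ; have [P0 Q0] : P != 0 /\ Q != 0 by apply/norP; rewrite -mulf_eq0.
move: (msize_dhomog PQ0 hPQ); rewrite msizeM // (msize_dhomog P0 hP).
by have := msize_poly_eq0 Q; case: (msize Q) => [/eqP|m _]; rewrite ?(negbTE Q0) //; lia.
Qed.

Lemma dhomogM_leq (d e : nat) P Q : P * Q != 0 -> P \is e.-homog -> P * Q \is d.-homog ->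
  (e <= d)%N.
Proof.
move=> PQ0 hP hPQ; have := msize_dhomogM PQ0 hP hPQ.
have [_ Q0] : P != 0 /\ Q != 0 by apply/norP; rewrite -mulf_eq0.
by move: (msize_poly_eq0 Q); rewrite (negbTE Q0); case: (msize Q) => //; lia.
Qed.

Lemma dhomogM_const (d : nat) P Q : P * Q != 0 -> P \is d.-homog -> P * Q \is d.-homog ->
  Q = (Q@_0)%:MP.
Proof.
move=> PQ0 hP hPQ; apply: msize1_polyC.
by have := msize_dhomogM PQ0 hP hPQ; lia.
Qed.

Lemma lin_form_coef v i : (lin_form v)@_U_(i) = v i.
Proof.
rewrite /lin_form raddf_sum /= (bigD1 i) //= big1 ?addr0.
  by rewrite mcoeffZ mcoeffXU eqxx mulr1.
by move=> j /negbTE ji; rewrite mcoeffZ mcoeffXU ji mulr0.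
Qed.

Lemma lin_form_neq0 v k : v k != 0 -> lin_form v != 0.
Proof. by apply: contraNneq => v0; rewrite -lin_form_coef v0 mcoeff0. Qed.

Lemma lin_formB v w c : lin_form (fun i => v i - c * w i) = lin_form v - c *: lin_form w.
Proof.
rewrite /lin_form scaler_sumr -sumrB; apply: eq_bigr => i _.
by rewrite scalerBl scalerA.
Qed.

Lemma lin_form_delta (j : 'I_n) : lin_form (fun i => (i == j)%:R : K) = 'X_j.
Proof.
rewrite /lin_form (bigD1 j) //= big1 ?addr0; first by rewrite eqxx scale1r.
by move=> i /negbTE ->; rewrite scale0r.
Qed.

Section Hyperplane.
Variables (v : 'I_n -> K) (k : 'I_n).
Hypothesis vk : v k != 0.

(* A ring retraction onto the hyperplane [l_v = 0], with kernel the ideal [(l_v)]. *)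
Definition hyp_subst : n.-tuple S :=
  [tuple 'X_j - ((j == k)%:R / v k) *: lin_form v | j < n].

Lemma comp_hyp_substX j : ('X_j : S) \mPo hyp_subst = 'X_j - ((j == k)%:R / v k) *: lin_form v.
Proof. by rewrite comp_mpolyXU -tnth_nth tnth_mktuple. Qed.

Lemma lin_form_comp_hyp_subst w :
  lin_form w \mPo hyp_subst = lin_form w - (w k / v k) *: lin_form v.
Proof.
rewrite {1}/lin_form raddf_sum /=.
under eq_bigr => j _ do rewrite comp_mpolyZ comp_hyp_substX scalerBr scalerA.
rewrite sumrB -/(lin_form w) -scaler_suml; congr (_ - _ *: _).
rewrite (bigD1 k) //= big1 ?addr0; first by rewrite eqxx mul1r.
by move=> j /negbTE ->; rewrite mul0r mulr0.
Qed.

Lemma lin_form_comp_hyp_subst_self : lin_form v \mPo hyp_subst = 0.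
Proof. by rewrite lin_form_comp_hyp_subst divff // scale1r subrr. Qed.

Lemma mdvd_sub_comp_hyp_subst P : mdvd (lin_form v) (P - (P \mPo hyp_subst)).
Proof.
pose good Q := mdvd (lin_form v) (Q - (Q \mPo hyp_subst)).
have good1 : good 1 by exists 0; rewrite /good comp_mpoly1 subrr mulr0.
have goodX j : good 'X_j.
  exists ((j == k)%:R / v k)%:MP.
  by rewrite /good comp_hyp_substX opprB addrC subrK [RHS]mulrC mul_mpolyC.
have goodD Q1 Q2 : good Q1 -> good Q2 -> good (Q1 + Q2).
  by move=> g1 g2; rewrite /good comp_mpolyD opprD addrACA; apply: mdvdD.
have goodM Q1 Q2 : good Q1 -> good Q2 -> good (Q1 * Q2).
  move=> g1 g2; rewrite /good rmorphM /=.
  have -> : Q1 * Q2 - (Q1 \mPo hyp_subst) * (Q2 \mPo hyp_subst)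
    = Q1 * (Q2 - (Q2 \mPo hyp_subst)) + (Q1 - (Q1 \mPo hyp_subst)) * (Q2 \mPo hyp_subst).
    by ring.
  by apply: mdvdD; [apply: mdvd_mull | apply: mdvd_mulr].
have goodZ c Q : good Q -> good (c *: Q).
  by move=> [Q' E]; exists (c *: Q'); rewrite /good comp_mpolyZ -scalerBr E scalerAr.
rewrite [P]mpolyE; apply: (big_ind good) => //.
  by exists 0; rewrite raddf0 subrr mulr0.
move=> m _; apply: goodZ; rewrite mpolyXE_id; apply: (big_ind good) => // i _.
by elim: (m i) => [|e IH]; rewrite ?expr0 // exprS; apply: goodM.
Qed.

Lemma lin_form_mdvdP P : mdvd (lin_form v) P <-> P \mPo hyp_subst = 0.
Proof.
split=> [[Q ->]|P0]; first by rewrite rmorphM /= lin_form_comp_hyp_subst_self mul0r.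
by have := mdvd_sub_comp_hyp_subst P; rewrite P0 subr0.
Qed.

Lemma lin_form_prime P Q :
  mdvd (lin_form v) (P * Q) -> mdvd (lin_form v) P \/ mdvd (lin_form v) Q.
Proof.
rewrite !lin_form_mdvdP rmorphM /= => /eqP; rewrite mulf_eq0.
by case/orP => /eqP; [left | right].
Qed.

Lemma lin_form_mdvd_proportional w : mdvd (lin_form v) (lin_form w) -> proportional v w.
Proof.
rewrite lin_form_mdvdP lin_form_comp_hyp_subst -lin_formB => /(congr1 (mcoeff U_(_))) E.
exists (w k / v k) => i; apply/eqP; rewrite -subr_eq0.
by have := E i; rewrite lin_form_coef mcoeff0 => ->.
Qed.

End Hyperplane.

Lemma lin_form_mdvd_mul v k w P : v k != 0 -> ~ proportional v w ->
  mdvd (lin_form v) (lin_form w * P) -> mdvd (lin_form v) P.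
Proof.
by move=> vk npvw /(lin_form_prime vk) [/(lin_form_mdvd_proportional vk) /npvw|].
Qed.

Lemma lin_forms_cross a b k x y : a k != 0 -> ~ proportional a b ->
  lin_form a * y = lin_form b * x -> exists u, x = lin_form a * u /\ y = lin_form b * u.
Proof.
move=> ak npab E.
have [u xE] : mdvd (lin_form a) x by apply: (lin_form_mdvd_mul ak npab); exists y.
exists u; split=> //; apply: (mulfI (lin_form_neq0 ak)).
by rewrite E xE mulrCA.
Qed.

Lemma mdvd_derivation_factor v k h (rho : 'I_n -> S) : v k != 0 ->
  ~ mdvd (lin_form v) h -> derivation rho (lin_form v * h) = 0 ->
  mdvd (lin_form v) (derivation rho (lin_form v)).
Proof.
move=> vk ndvd; rewrite derivationM => /eqP; rewrite addr_eq0 => /eqP E.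
have : mdvd (lin_form v) (derivation rho (lin_form v) * h).
  by exists (- derivation rho h); rewrite E mulrN.
by case/(lin_form_prime vk).
Qed.

Lemma mdvd_coef_off_line v k (h u w : S) p : v k != 0 -> ~ mdvd (lin_form v) h ->
  \sum_(i < n) v i * p i != 0 ->
  u * (lin_form v * h) + w * derivation (const_field p) (lin_form v * h) = 0 ->
  mdvd (lin_form v) w.
Proof.
move=> vk ndvd vp0; set c := \sum_(i < n) v i * p i.
rewrite derivationM derivation_const_lin_form -/c => E.
have : mdvd (lin_form v) (w * h * c%:MP).
  by exists (- (u * h + w * derivation (const_field p) h)); rewrite -[LHS]subr0 -E; ring.
case/(lin_form_prime vk) => [/(lin_form_prime vk) [//|/ndvd//]|].
by rewrite (lin_form_mdvdP vk) comp_mpolyC => /eqP; rewrite mpolyC_eq0 (negbTE vp0).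
Qed.

Implicit Types (s : seq {ffun 'I_n -> K}) (l : {ffun 'I_n -> K}).

Definition distinct_lines s : Prop :=
  [/\ {in s, forall l, exists k, l k != 0}, uniq s &
      {in s &, forall l l', l != l' -> ~ proportional l l'}].

Lemma distinct_lines_filter (a : pred {ffun 'I_n -> K}) s :
  distinct_lines s -> distinct_lines (filter a s).
Proof.
case=> nz un np; split; first by move=> v; rewrite mem_filter => /andP[_ /nz].
- exact: filter_uniq.
- by move=> v w; rewrite !mem_filter => /andP[_ vs] /andP[_ ws]; apply: np.
Qed.

Lemma distinct_lines_nz s l : distinct_lines s -> l \in s -> exists k, l k != 0.
Proof. by case=> nz _ _ /nz. Qed.

Lemma lin_prod_neq0 s : distinct_lines s -> lin_prod s != 0.
Proof.
move=> ds; rewrite /lin_prod prodf_seq_neq0; apply/allP => l /(distinct_lines_nz ds) [k lk].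
exact: lin_form_neq0 lk.
Qed.

Lemma lin_prod_not_mdvd v k s : v k != 0 -> {in s, forall l, ~ proportional v l} ->
  ~ mdvd (lin_form v) (lin_prod s).
Proof.
move=> vk; elim: s => [|w s IH] np.
  by rewrite lin_prod_nil (lin_form_mdvdP vk) comp_mpoly1 => /eqP; rewrite oner_eq0.
rewrite lin_prod_cons => /(lin_form_prime vk) [/(lin_form_mdvd_proportional vk)|].
  by apply: np; rewrite mem_head.
by apply: IH => u us; apply: np; rewrite inE us orbT.
Qed.

Lemma lin_prod_rem_not_mdvd s l k : distinct_lines s -> l \in s -> l k != 0 ->
  ~ mdvd (lin_form l) (lin_prod (rem l s)).
Proof.
case=> _ un np ls lk; apply: (lin_prod_not_mdvd lk) => l'.
rewrite mem_rem_uniq // inE => /andP[l'l l's].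
by apply: np; rewrite // eq_sym.
Qed.

Lemma lin_prod_mdvd s P : distinct_lines s ->
  {in s, forall l, mdvd (lin_form l) P} -> mdvd (lin_prod s) P.
Proof.
elim: s P => [|v s IH] P; first by exists P; rewrite lin_prod_nil mul1r.
case=> nz /= /andP[vs un] np dvdP.
have [Q PE] := dvdP v (mem_head _ _).
have [||Q' QE] := IH Q.
- split=> //; first by move=> u us; apply: nz; rewrite inE us orbT.
  by move=> u w us ws; apply: np; rewrite inE ?us ?ws orbT.
- move=> w ws; have [k' wk'] : exists k', w k' != 0 by apply: nz; rewrite inE ws orbT.
  have npwv : ~ proportional w v.
    by apply: np; rewrite ?inE ?eqxx ?ws ?orbT //; apply: contraNneq vs => <-.
  by apply: (lin_form_mdvd_mul wk' npwv); rewrite -PE; apply: dvdP; rewrite inE ws orbT.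
by exists Q'; rewrite PE QE lin_prod_cons mulrA.
Qed.

End LinearFactors.

Local Notation x0 := (@Ordinal 3 0 isT).
Local Notation x1 := (@Ordinal 3 1 isT).
Local Notation x2 := (@Ordinal 3 2 isT).

Lemma ord3P (i : 'I_3) : [\/ i = x0, i = x1 | i = x2].
Proof.
by case: i => [[|[|[|//]]] Hi]; [constructor 1 | constructor 2 | constructor 3]; apply: val_inj.
Qed.

Lemma big_ord3 (V : nmodType) (F : 'I_3 -> V) : \sum_(i < 3) F i = F x0 + F x1 + F x2.
Proof.
rewrite !big_ord_recr big_ord0 /= add0r.
by congr (F _ + F _ + F _); apply: val_inj.
Qed.

Lemma ord3_other2 (k : 'I_3) : exists x y : 'I_3,
  [/\ x != y, x != k, y != k & forall i, [\/ i = x, i = y | i = k]].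
Proof.
case: (ord3P k) => ->;
  [exists x1, x2 | exists x0, x2 | exists x0, x1]; split=> // i;
  by case: (ord3P i) => ->; first [exact: Or31 | exact: Or32 | exact: Or33].
Qed.

Section Determinant.
Variable K : fieldType.
Local Notation S := {mpoly K[3]}.
Implicit Types (a b c x y : 'I_3 -> S).

Definition det3 a b c : S :=
  a x0 * (b x1 * c x2 - b x2 * c x1) - a x1 * (b x0 * c x2 - b x2 * c x0)
  + a x2 * (b x0 * c x1 - b x1 * c x0).

Lemma det3_shift a b c (s t : S) :
  det3 a (fun i => b i - s * a i) (fun i => c i - t * a i) = det3 a b c.
Proof. by rewrite /det3; ring. Qed.

Lemma det3_comb a b x y (s t : S) :
  det3 a b (fun i => s * x i + t * y i) = s * det3 a b x + t * det3 a b y.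
Proof. by rewrite /det3; ring. Qed.

(* Cramer's rule for the column vector [v]. *)
Lemma det3_mul_coord a b c (v : 'I_3 -> K) k : exists A B C : S,
  det3 a b c * (v k)%:MP = A * (\sum_(i < 3) a i * (v i)%:MP)
    + B * (\sum_(i < 3) b i * (v i)%:MP) + C * (\sum_(i < 3) c i * (v i)%:MP).
Proof.
rewrite !big_ord3 /det3; case: (ord3P k) => ->.
- exists (b x1 * c x2 - b x2 * c x1), (a x2 * c x1 - a x1 * c x2).
  by exists (a x1 * b x2 - a x2 * b x1); ring.
- exists (b x2 * c x0 - b x0 * c x2), (a x0 * c x2 - a x2 * c x0).
  by exists (a x2 * b x0 - a x0 * b x2); ring.
- exists (b x0 * c x1 - b x1 * c x0), (a x1 * c x0 - a x0 * c x1).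
  by exists (a x0 * b x1 - a x1 * b x0); ring.
Qed.

Lemma det3_mdvd (l : S) a b c (v : 'I_3 -> K) k : v k != 0 ->
  mdvd l (\sum_(i < 3) a i * (v i)%:MP) -> mdvd l (\sum_(i < 3) b i * (v i)%:MP) ->
  mdvd l (\sum_(i < 3) c i * (v i)%:MP) -> mdvd l (det3 a b c).
Proof.
move=> vk da db dc; have [A [B [C E]]] := det3_mul_coord a b c v k.
have -> : det3 a b c = det3 a b c * (v k)%:MP * ((v k)^-1)%:MP.
  by rewrite -mulrA -rmorphM divff // rmorph1 mulr1.
rewrite E; apply: mdvd_mulr.
by apply: mdvdD; first apply: mdvdD; apply: mdvd_mull.
Qed.

Lemma det3_minor_eq a b c k : a k != 0 -> b k = 0 -> c k = 0 -> det3 a b c = 0 ->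
  forall i j, b i * c j = b j * c i.
Proof.
rewrite /det3 => ak bk ck D.
have minor (i j : 'I_3) : a k * (b i * c j - b j * c i) = 0 -> b i * c j = b j * c i.
  by move=> /eqP; rewrite mulf_eq0 (negbTE ak) subr_eq0 => /eqP.
case: (ord3P k) => Ek; subst k; rewrite bk ck in D.
- have key : b x1 * c x2 = b x2 * c x1 by apply: minor; rewrite -D; ring.
  by move=> i j; case: (ord3P i) => ->; case: (ord3P j) => ->; rewrite ?bk ?ck ?mul0r ?mulr0.
- have key : b x0 * c x2 = b x2 * c x0 by apply: minor; rewrite -oppr0 -D; ring.
  by move=> i j; case: (ord3P i) => ->; case: (ord3P j) => ->; rewrite ?bk ?ck ?mul0r ?mulr0.
- have key : b x0 * c x1 = b x1 * c x0 by apply: minor; rewrite -D; ring.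
  by move=> i j; case: (ord3P i) => ->; case: (ord3P j) => ->; rewrite ?bk ?ck ?mul0r ?mulr0.
Qed.

(* Subtracting multiples of [p] from [X] and [rho] kills their [k]-th entries
   [Y k] and [r k]; the vanishing determinant then says that the 2x2 minors of
   [Y] and [r] vanish, and two of the entries of [Y] are independent linear forms. *)
Lemma det3_eq0_decomp (p : 'I_3 -> K) k rho : p k != 0 ->
  det3 (const_field p) euler_field rho = 0 ->
  exists u w : S, forall i, rho i = u * 'X_i + w * (p i)%:MP.
Proof.
move=> pk D; set c := ((p k)^-1)%:MP : S.
pose Y i := 'X_i - ('X_k * c) * (p i)%:MP.
pose r i := rho i - (c * rho k) * (p i)%:MP.
have cpk : c * (p k)%:MP = 1 by rewrite -rmorphM mulVf // rmorph1.
have Yk : Y k = 0 by rewrite /Y -mulrA cpk mulr1 subrr.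
have rk : r k = 0 by rewrite /r mulrAC cpk mul1r subrr.
have minorYr : forall i j, Y i * r j = Y j * r i.
  apply: (@det3_minor_eq (const_field p) Y r k _ Yk rk); first by rewrite mpolyC_eq0.
  by rewrite -D -(det3_shift _ euler_field rho ('X_k * c) (c * rho k)).
have [x [y [xy xk yk xyk]]] := ord3_other2 k.
pose e z i : K := (i == z)%:R - (p z / p k) * (i == k)%:R.
have Ye z : Y z = lin_form (e z).
  rewrite lin_formB !lin_form_delta /Y -mul_mpolyC rmorphM /=; ring.
have exx : e x x != 0 by rewrite /e eqxx (negbTE xk) mulr0 subr0 oner_eq0.
have npxy : ~ proportional (e x) (e y).
  have yx : (y == x) = false by rewrite eq_sym (negbTE xy).
  move=> [lam /(_ y)]; rewrite /e eqxx yx (negbTE yk) !mulr0 !subr0.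
  by rewrite mulr0 => /eqP; rewrite oner_eq0.
have [u [rx ry]] : exists u, r x = Y x * u /\ r y = Y y * u.
  by rewrite !Ye; apply: (lin_forms_cross exx npxy); rewrite -!Ye minorYr.
have rE i : r i = Y i * u by case: (xyk i) => ->; rewrite ?rk ?Yk ?mul0r.
exists u, (c * rho k - u * ('X_k * c)) => i.
by move/eqP: (rE i); rewrite /r /Y subr_eq => /eqP ->; ring.
Qed.

Lemma det3_dhomog (p : 'I_3 -> K) rho d : (forall i, rho i \is d.-homog) ->
  det3 (const_field p) euler_field rho \is d.+1.-homog.
Proof.
move=> hrho; have hm (i j l m : 'I_3) : 'X_i * rho j - 'X_l * rho m \is d.+1.-homog.
  by apply: rpredB; apply: (dhomogM (mpolyX_dhomog _) (hrho _)).
rewrite /det3 /const_field /euler_field !mul_mpolyC.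
by apply: rpredD; [apply: rpredB|]; apply/dhomogZ/hm.
Qed.

End Determinant.

Section Syzygies.
Variables (K : fieldType) (L : seq {ffun 'I_3 -> K}) (p : 'I_3 -> K).
Local Notation S := {mpoly K[3]}.
Implicit Types (rho : 'I_3 -> S).

Definition lines_through := [seq l <- L | incident p l].
Definition lines_off := [seq l <- L | ~~ incident p l].

Local Notation f := (lin_prod L).
Local Notation g := (lin_prod lines_through).
Local Notation h := (lin_prod lines_off).
Local Notation Dp := (derivation (const_field p)).
Local Notation detp rho := (det3 (const_field p) euler_field rho).

(* With [f = g h], [g] the lines through [p]: the Euler relation and
   [D_p f = g D_p h] make this a syzygy of degree [deg h]. *)
Definition point_syzygy : 'I_3 -> S := fun i => Dp h * 'X_i - (size L)%:R * h * (p i)%:MP.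

Lemma size_lines_through_off : size L = (size lines_through + size lines_off)%N.
Proof. by rewrite !size_filter count_predC. Qed.

Lemma derivation_const_split : Dp f = g * Dp h.
Proof.
rewrite (lin_prod_filterC (incident p) L) derivationM derivation_const_lin_prod_incident.
  by rewrite mul0r add0r.
by apply/allP => l; rewrite mem_filter => /andP[].
Qed.

Lemma derivation_point_syzygy : derivation point_syzygy f = 0.
Proof.
rewrite (eq_derivation _ (_ : _ =1 fun i => Dp h * euler_field i
  + (- ((size L)%:R * h)) * const_field p i)); last by move=> i; rewrite mulNr.
rewrite derivation_comb euler_lin_prod derivation_const_split.
by rewrite (lin_prod_filterC (incident p) L); ring.
Qed.

Lemma det3_point_syzygy : detp point_syzygy = 0.
Proof. by rewrite /det3 /point_syzygy /const_field /euler_field; ring. Qed.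

Lemma point_syzygy_dhomog i : point_syzygy i \is (size lines_off).-homog.
Proof.
apply: rpredB; last by rewrite mulrC mul_mpolyC mulr_natl; apply/dhomogZ/rpredMn/lin_prod_dhomog.
have := derivation_const_lin_prod_dhomog p lines_off.
case: lines_off => [|l s] hD; first by rewrite lin_prod_nil derivation1 mul0r dhomog0.
by rewrite /= -[(size s).+1]addn1; apply: (dhomogM hD (mpolyX_dhomog _)).
Qed.

Hypothesis K_char0 : [pchar K] =i pred0.

Lemma point_syzygy_neq0 i :
  p i != 0 -> (0 < size lines_through)%N -> point_syzygy i != 0.
Proof.
move=> pi0 through0; apply/eqP => /(congr1 (meval p)).
rewrite /point_syzygy mevalB !mevalM mevalXU mevalC meval_derivation_const euler_lin_prod.
rewrite mevalM !mevalMn meval1 meval0 size_lines_through_off natrD.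
have h0 : h.@[p] != 0.
  rewrite /lin_prod rmorph_prod prodf_seq_neq0; apply/allP => l.
  by rewrite mem_filter /= (meval_lin_form p l) => /andP[].
move/eqP; rewrite -!mulrBl (addrC (size lines_through)%:R) opprD addrA subrr add0r.
rewrite !mulNr oppr_eq0 !mulf_eq0 (negbTE h0) (negbTE pi0) !orbF.
by move/pcharf0P: K_char0 => ->; rewrite eqn0Ngt through0.
Qed.

Hypothesis L_lines : distinct_lines L.

Lemma syzygy_lin_form_mdvd rho l : l \in L -> derivation rho f = 0 ->
  mdvd (lin_form l) (derivation rho (lin_form l)).
Proof.
move=> lL; have [k lk] := distinct_lines_nz L_lines lL.
rewrite (lin_prod_rem lL); apply: (mdvd_derivation_factor lk).
exact: lin_prod_rem_not_mdvd lk.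
Qed.

Lemma syzygy_det3_mdvd rho : derivation rho f = 0 ->
  mdvd g (detp rho).
Proof.
move=> syz; apply: lin_prod_mdvd (distinct_lines_filter _ L_lines) _ => l.
rewrite mem_filter => /andP[/eqP pl lL].
have [k lk] := distinct_lines_nz L_lines lL.
apply: (det3_mdvd lk).
- by exists 0; rewrite mulr0 -[RHS](rmorph0 (@mpolyC 3 K)) -pl rmorph_sum;
    apply: eq_bigr => i _; rewrite -rmorphM mulrC.
- by exists 1; rewrite mulr1; apply: eq_bigr => i _; rewrite mulrC mul_mpolyC.
- by rewrite -derivation_lin_form; apply: syzygy_lin_form_mdvd.
Qed.

Lemma lines_off_coef_mdvd (u w : S) : u * h + w * Dp h = 0 -> mdvd h w.
Proof.
move=> E; apply: lin_prod_mdvd (distinct_lines_filter _ L_lines) _ => l lo.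
have := lo; rewrite mem_filter => /andP[pl lL].
have [k lk] := distinct_lines_nz L_lines lL.
move: E; rewrite (lin_prod_rem lo); apply: (mdvd_coef_off_line lk) => //.
exact: lin_prod_rem_not_mdvd (distinct_lines_filter _ L_lines) lo lk.
Qed.

Variable k : 'I_3.
Hypotheses (pk : p k != 0) (through0 : (0 < size lines_through)%N).

Lemma syzygy_det3_eq0_multiple rho : derivation rho f = 0 ->
  detp rho = 0 -> exists c, forall i, rho i = c * point_syzygy i.
Proof.
move=> syz D; have [u [w rhoE]] := det3_eq0_decomp pk D.
have g0 : g != 0 := lin_prod_neq0 (distinct_lines_filter _ L_lines).
have h0 : h != 0 := lin_prod_neq0 (distinct_lines_filter _ L_lines).
have d0 : (size L)%:R != 0 :> K.
  by move/pcharf0P: K_char0 => ->; rewrite size_lines_through_off -lt0n; lia.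
have uwE : u * (size L)%:R * h + w * Dp h = 0.
  apply: (mulfI g0); rewrite mulr0 -syz (eq_derivation f rhoE) derivation_comb.
  rewrite euler_lin_prod derivation_const_split.
  by rewrite (lin_prod_filterC (incident p) L); ring.
have [c wE] := lines_off_coef_mdvd uwE.
set e : S := ((size L)%:R^-1)%:MP.
have ed : e * (size L)%:R = 1 by rewrite -(rmorph_nat (@mpolyC 3 K)) -rmorphM mulVf // rmorph1.
have uE : u = - (e * c * Dp h).
  have : h * (u * (size L)%:R + c * Dp h) = 0 by rewrite -uwE wE; ring.
  move/eqP; rewrite mulf_eq0 (negbTE h0) /= addr_eq0 => /eqP ud.
  by rewrite -[u]mulr1 -ed mulrCA ud mulrN mulrA.
exists (- (e * c)) => i; rewrite rhoE uE wE /point_syzygy.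
transitivity (- (e * c * Dp h) * 'X_i + h * c * (p i)%:MP * (e * (size L)%:R)).
  by rewrite ed mulr1.
by ring.
Qed.

Lemma syzygy_det3_neq0_lt rho d j : (forall i, rho i \is d.-homog) ->
  derivation rho f = 0 -> rho j != 0 -> (d < size lines_off)%N -> detp rho != 0.
Proof.
move=> hrho syz rj dlt; apply/eqP => D; have [c rhoE] := syzygy_det3_eq0_multiple syz D.
have := @dhomogM_leq _ _ d (size lines_off) (point_syzygy j) c.
by rewrite mulrC -rhoE => /(_ rj (point_syzygy_dhomog j) (hrho j)); lia.
Qed.

Lemma syzygy_det3_size_through_le rho d : (forall i, rho i \is d.-homog) ->
  derivation rho f = 0 -> detp rho != 0 -> (size lines_through <= d.+1)%N.
Proof.
move=> hrho syz D0; have [q E] := syzygy_det3_mdvd syz.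
by apply: (@dhomogM_leq _ _ _ _ g q); rewrite -?E ?lin_prod_dhomog ?det3_dhomog.
Qed.

Section MinimalDegree.
Variable rho1 : 'I_3 -> S.
Hypotheses (rho1_homog : forall i, rho1 i \is (size lines_through).-1.-homog)
  (rho1_syz : derivation rho1 f = 0) (rho1_det : detp rho1 != 0).

Lemma det3_minimal_syzygy : exists2 c : K, c != 0 & detp rho1 = g * c%:MP.
Proof.
have [q E] := syzygy_det3_mdvd rho1_syz.
have hD := det3_dhomog p rho1_homog; rewrite prednK // E in hD.
have gq0 : g * q != 0 by rewrite -E.
have qE := dhomogM_const gq0 (lin_prod_dhomog _) hD.
exists q@_0; last by rewrite E {1}qE.
by apply: contraNneq gq0 => q0; rewrite qE q0 raddf0 mulr0.
Qed.

Lemma minimal_syzygy_span rho : derivation rho f = 0 ->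
  exists a b : S, forall i, rho i = a * rho1 i + b * point_syzygy i.
Proof.
move=> syz; have [c c0 E1] := det3_minimal_syzygy; have [q detE] := syzygy_det3_mdvd syz.
set a := (c^-1)%:MP * q.
have cc : (c^-1)%:MP * c%:MP = 1 :> S by rewrite -rmorphM mulVf // rmorph1.
have D' : detp (fun i => 1 * rho i + (- a) * rho1 i) = 0.
  rewrite det3_comb detE E1 /a; transitivity (g * q * (1 - (c^-1)%:MP * c%:MP)); first by ring.
  by rewrite cc subrr mulr0.
have syz' : derivation (fun i => 1 * rho i + (- a) * rho1 i) f = 0.
  by rewrite derivation_comb syz rho1_syz !mulr0 addr0.
have [b Eb] := syzygy_det3_eq0_multiple syz' D'.
by exists a, b => i; move/eqP: (Eb i); rewrite mul1r mulNr subr_eq addrC => /eqP.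
Qed.

Lemma minimal_point_syzygy_free a b :
  (forall i, a * rho1 i + b * point_syzygy i = 0) -> a = 0 /\ b = 0.
Proof.
move=> E; have D : detp (fun i => a * rho1 i + b * point_syzygy i) = 0.
  by rewrite /det3 !E !mulr0 !subrr !mulr0 !addr0 subrr.
rewrite det3_comb det3_point_syzygy mulr0 addr0 in D.
have a0 : a = 0 by apply/eqP; move/eqP: D; rewrite mulf_eq0 (negbTE rho1_det) orbF.
split=> //; move/eqP: (E k); rewrite a0 mul0r add0r mulf_eq0.
by rewrite (negbTE (point_syzygy_neq0 pk through0)) orbF => /eqP.
Qed.

End MinimalDegree.

End Syzygies.

Section LineArrangement.
Variables (R : realType) (L : seq ('I_3 -> complex R)).

Definition ffun_lines : seq {ffun 'I_3 -> complex R} := [seq [ffun i => v i] | v <- L].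

Lemma arr_poly_lin_prod : arr_poly L = lin_prod ffun_lines.
Proof.
by rewrite /lin_prod big_map; apply: eq_bigr => v _; apply: eq_bigr => i _; rewrite ffunE.
Qed.

Lemma mult_pt_size_through p : mult_pt L p = size (lines_through ffun_lines p).
Proof.
rewrite size_filter count_map; apply: eq_count => v /=.
by rewrite /on_line /incident; congr (_ == _); apply: eq_bigr => i _; rewrite ffunE.
Qed.

Lemma line_arrangement_distinct : is_line_arrangement L -> distinct_lines ffun_lines.
Proof.
have nthE i : (i < size L)%N -> nth [ffun=> 0] ffun_lines i = [ffun k => nth (fun=> 0) L i k].
  by move=> iL; rewrite (nth_map (fun=> 0)).
have memL l : l \in ffun_lines -> exists2 i, (i < size L)%N & l = nth [ffun=> 0] ffun_lines i.
  by case/(nthP [ffun=> 0]) => i; rewrite size_map => iL <-; exists i.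
case=> nz np; split.
- by move=> l /memL [i iL ->]; have [k Hk] := nz i iL; exists k; rewrite nthE // ffunE.
- apply/(uniqPn [ffun=> 0]) => -[i [j [ij]]]; rewrite size_map => jL E.
  have ne : i <> j by move=> eij; rewrite eij ltnn in ij.
  apply: (np i j (ltn_trans ij jL) jL ne 1) => k.
  by move/ffunP/(_ k): E; rewrite !nthE ?(ltn_trans ij jL) // !ffunE mul1r => ->.
- move=> l l' /memL [i iL ->] /memL [j jL ->] ll' [c E]; apply: (np i j iL jL _ c).
    by move=> ij; rewrite ij eqxx in ll'.
  by move=> k; move: (E k); rewrite !nthE // !ffunE.
Qed.

Lemma size_ffun_lines : size ffun_lines = size L.
Proof. exact: size_map. Qed.

Section Point.
Variables (p : 'I_3 -> complex R) (k : 'I_3).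
Hypotheses (pk : p k != 0) (through0 : (0 < size (lines_through ffun_lines p))%N).
Local Notation char0 := (@pchar_num (complex R)).

Lemma mdr_le_size_lines_off r :
  mdr_is (lin_prod ffun_lines) r -> (r <= size (lines_off ffun_lines p))%N.
Proof.
case=> _ minr; rewrite leqNgt; apply/negP => lt; have := point_syzygy_neq0 char0 pk through0.
by rewrite (minr _ lt _ (point_syzygy_dhomog _ p) (derivation_point_syzygy _ p) k) eqxx.
Qed.

Lemma free_minimal_point_syzygy rho1 : distinct_lines ffun_lines ->
  ((size (lines_through ffun_lines p)).-1 <= size (lines_off ffun_lines p))%N ->
  homog_triple (size (lines_through ffun_lines p)).-1 rho1 ->
  is_syzygy (lin_prod ffun_lines) rho1 -> det3 (const_field p) euler_field rho1 != 0 ->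
  free_with_exponents (lin_prod ffun_lines)
    (size (lines_through ffun_lines p)).-1 (size (lines_off ffun_lines p)).
Proof.
move=> lines le hom1 syz1 det0; split=> //; exists rho1, (point_syzygy ffun_lines p); split.
- by split=> // i; apply: point_syzygy_dhomog.
- by split=> //; apply: derivation_point_syzygy.
- by move=> rho; apply: (minimal_syzygy_span char0 lines pk through0 hom1 syz1 det0).
- by move=> h1 h2; apply: (minimal_point_syzygy_free char0 pk through0 det0).
Qed.

End Point.

End LineArrangement.

Theorem theorem1p2 (R : realType) (L : seq ('I_3 -> complex R))
    (p : 'I_3 -> complex R) (r : nat) :
  is_line_arrangement L ->
  is_intersection_point L p ->
  let d := size L in
  let m := mult_pt L p in
  mdr_is (arr_poly L) r ->
  r = (d - m)%N \/
  ((r < d - m)%N /\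
   (((r < m)%N /\ r = (m - 1)%N /\ (2 * m < d + 1)%N /\
     free_with_exponents (arr_poly L) (m - 1) (d - m)) \/
    ((m <= r)%N /\ (r < d - m)%N /\ (2 * m < d)%N))).
Proof.
move=> /line_arrangement_distinct lines [[k pk] m2] d m mdr.
have char0 := @pchar_num (complex R).
rewrite arr_poly_lin_prod in mdr *; set Lf := ffun_lines L in lines mdr *.
have mE : m = size (lines_through Lf p) := mult_pt_size_through L p.
have offE : (d - m)%N = size (lines_off Lf p).
  by rewrite mE /d -(size_ffun_lines L) (size_lines_through_off _ p) addKn.
have through0 : (0 < size (lines_through Lf p))%N by rewrite -mE; lia.
have := mdr_le_size_lines_off pk through0 mdr; rewrite -offE leq_eqVlt.
case/orP=> [/eqP|rlt]; [by left | right; split=> //].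
have [[rho1 [hom1 [syz1 [j rho1j]]]] _] := mdr.
have det0 : det3 (const_field p) euler_field rho1 != 0.
  by apply: (syzygy_det3_neq0_lt char0 lines pk through0 hom1 syz1 rho1j); rewrite -offE.
have := syzygy_det3_size_through_le lines hom1 syz1 det0; rewrite -mE => mle.
have [mr|rm] := leqP m r; first by right; lia.
have rE : r = (m - 1)%N by lia.
left; do 3!(split; first lia).
rewrite offE mE subn1; rewrite rE mE subn1 in hom1.
by apply: (free_minimal_point_syzygy pk through0); rewrite // -mE -offE -subn1; lia.
Qed.
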